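(* Consider $\mathbb{Z}$ with the metric $d(x,y)=|x-y|$ and the $c_1$-adjacency (i.e., $x,y$ are adjacent iff $|x-y|=1$). Let $S,T:\mathbb{Z}\to\mathbb{Z}$ be such that $x\neq y$ implies $d(S(x),S(y))<d(T(x),T(y))$. If $T$ is $c_1$-continuous, then $S$ is a constant function.
   Context: A function $f:(X,\kappa)\to(Y,\lambda)$ between digital images (sets of lattice points with adjacency relations) is $(\kappa,\lambda)$-continuous iff whenever $x$ and $x'$ are $\kappa$-adjacent in $X$, either $f(x)=f(x')$ or $f(x)$ and $f(x')$ are $\lambda$-adjacent in $Y$. Here $c_1$-continuous means $(c_1,c_1)$-continuous. *)

From Stdlib Require Import ZArith.
Open Scope Z_scope.

Definition dZ (x y : Z) : Z := Z.abs (x - y).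

Definition c1_adj (x y : Z) : Prop := Z.abs (x - y) = 1.

Definition c1_continuous (f : Z -> Z) : Prop :=
  forall x x' : Z, c1_adj x x' -> f x = f x' \/ c1_adj (f x) (f x').

(* A c1-continuous map moves neighbours by at most 1, so S moves neighbours by
   strictly less than 1, i.e. not at all; hence S is invariant under x |-> x + 1
   and therefore constant on Z. *)
From Stdlib Require Import ZArith Lia.
Open Scope Z_scope.

Lemma dZ_lt_1_eq (a b : Z) : dZ a b < 1 -> a = b.
Proof. unfold dZ; lia. Qed.

Lemma c1_continuous_dZ_succ (f : Z -> Z) :
  c1_continuous f -> forall x : Z, dZ (f (x + 1)) (f x) <= 1.
Proof.
  intros hf x.
  assert (hadj : c1_adj (x + 1) x) by (unfold c1_adj; lia).
  unfold dZ; destruct (hf _ _ hadj) as [-> | hfx]; [lia | exact (Z.eq_le_incl _ _ hfx)].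
Qed.

Lemma succ_invariant_const (f : Z -> Z) :
  (forall x : Z, f (x + 1) = f x) -> forall x y : Z, f x = f y.
Proof.
  intros hf.
  assert (hup : forall a n : Z, 0 <= n -> f (a + n) = f a).
  { intro a; apply natlike_ind.
    - now rewrite Z.add_0_r.
    - intros n _ IH. now rewrite Z.add_succ_r, <- Z.add_1_r, hf. }
  intros x y; destruct (Z.le_ge_cases x y).
  - replace y with (x + (y - x)) by lia. symmetry; apply hup; lia.
  - replace x with (y + (x - y)) by lia. apply hup; lia.
Qed.

Theorem proposition6p4 (S T : Z -> Z)
  (hST : forall x y : Z, x <> y -> dZ (S x) (S y) < dZ (T x) (T y))
  (hT : c1_continuous T) :
  forall x y : Z, S x = S y.
Proof.
  apply succ_invariant_const; intro x.
  apply dZ_lt_1_eq.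
  eapply Z.lt_le_trans.
  - apply hST; lia.
  - apply c1_continuous_dZ_succ, hT.
Qed.
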